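(* Let $C$ be an $A$-code of length $2$. Then $C$ is self-dual ($C=C^\perp$) if and only if either its canonical generator matrix is $(1\ \ g_2)$ with $g_2^2=-1$ in $A$, or its canonical generator matrix is $\begin{pmatrix}g_1&g_2\\0&g_3\end{pmatrix}$ (with $g_1,g_3$ nonzero monic divisors of $f$, $g_3\mid (f/g_1)g_2$, $\deg g_2<\deg g_3$) and there exist $g',f',r\in\mathbb{F}[x]$ with $g'^2=rf'-1$, $f=g_1^2f'$, $g_3=g_1f'$ and $g_2=g_1g'$.
   Context: Let $\mathbb{F}$ be a finite field, $f(x)\in\mathbb{F}[x]$ monic of degree $m$, $A=\mathbb{F}[x]/\langle f(x)\rangle$, elements identified with polynomials of degree $<m$. An $A$-code of length $l$ is an $A$-submodule of $A^l$; $C^\perp=\{a\in A^l:\sum_ia_ic_i=0\ \forall c\in C\}$. The canonical generator matrix (CGM) of a nonzero $A$-code $C$ is the unique matrix over $A$ whose rows generate $C$, are monic with strictly increasing leading indices (position of first nonzero entry), have leading entries dividing $f$, satisfy that $(f/L_i)\cdot(\text{row }i)$ is an $A$-combination of later rows ($L_i$ the leading entry of row $i$), and such that every entry above a leading entry has smaller degree than it. *)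

(* A = F[x]/<f> is modelled by mathcomp's qpoly type {poly %/ f}
   (elements are polynomials of size < size f, i.e. degree < m). *)
From HB Require Import structures.
From mathcomp Require Import all_boot all_order all_algebra.
Set Implicit Arguments. Unset Strict Implicit. Unset Printing Implicit Defensive.
Import GRing.Theory.
Local Open Scope ring_scope.

Section Codes.
Variables (F : finFieldType) (f : {poly F}).
Local Notation A := {poly %/ f}.

Definition apoly (a : A) : {poly F} := val a.

Definition is_code (l : nat) (C : {set 'rV[A]_l}) : Prop :=
  [/\ 0 \in C,
      (forall u v, u \in C -> v \in C -> u + v \in C)
    & (forall (a : A) u, u \in C -> a *: u \in C)].

Definition dual (l : nat) (C : {set 'rV[A]_l}) : {set 'rV[A]_l} :=
  [set a : 'rV[A]_l | [forall c in C, \sum_(i < l) a 0 i * c 0 i == 0]].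

(* G : 'M_(k,l) is the canonical generator matrix of C.  li i is the leading
   index of row i (position of its first nonzero entry). *)
Definition is_CGM (l : nat) (C : {set 'rV[A]_l}) (k : nat) (G : 'M[A]_(k, l)) : Prop :=
  exists li : 'I_k -> 'I_l,
  [/\
      (forall v, v \in C <-> exists a : 'rV[A]_k, v = a *m G),
      ((forall (i : 'I_k) (j : 'I_l), (j < li i)%N -> G i j = 0) /\ (forall i : 'I_k, G i (li i) != 0)),
      ((forall i : 'I_k, apoly (G i (li i)) \is monic) /\ (forall i : 'I_k, apoly (G i (li i)) %| f)),
      ((forall i i' : 'I_k, (i < i')%N -> (li i < li i')%N) /\
      (forall i : 'I_k, exists b : 'I_k -> A, (forall j : 'I_k, (j <= i)%N -> b j = 0) /\
          in_qpoly f (f %/ apoly (G i (li i))) *: row i G = \sum_(j < k) b j *: row j G))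
    &
      (forall i i' : 'I_k, (i' < i)%N ->
          (size (apoly (G i' (li i))) < size (apoly (G i (li i))))%N)].

Definition mx12 (a b : A) : 'M[A]_(1, 2) :=
  \matrix_(i < 1, j < 2) (if j == ord0 then a else b).
Definition mx22 (a b c d : A) : 'M[A]_(2, 2) :=
  \matrix_(i < 2, j < 2)
     (if i == ord0 then (if j == ord0 then a else b) else (if j == ord0 then c else d)).

End Codes.

From HB Require Import structures.
From mathcomp Require Import all_boot all_order all_algebra ring zify.
Import GRing.Theory.
Local Open Scope ring_scope.
Set Implicit Arguments. Unset Strict Implicit. Unset Printing Implicit Defensive.

(* The first coordinates of the codewords of C form an ideal of A = F[x]/(f),
   generated by a monic divisor g1 of f; the second coordinates of the
   codewords (0, b) form an ideal generated by a monic divisor g3.  Hence C is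
   the row space of ((g1, h), (0, g3)), and then C = C^perp says exactly that
   (a, b) lies in C iff a g1 + b h = 0 and b g3 = 0 in A.  Testing this on
   (f/g1, 0), (g1, h) and (0, g3) gives f = g1^2 f' and h = g1 g' with
   g'^2 = -1 mod f'; testing it on (0, g1 f') and using that g' and f' are
   coprime then gives g3 = g1 f'.
   Conversely these relations make the two rows orthogonal to each other and
   to themselves, and solving a g1 + b g1 g' = 0 = b g1 f' (mod f) with the
   help of g'^2 = r f' - 1 shows that C^perp is no larger than C.  The case
   g1 = 1 gives f' = f, so the second row vanishes in A and the canonical
   generator matrix is (1 g'). *)

Section PolyDivisibility.
Variable R : fieldType.

Lemma dvdp_sqr_sum (g f' h : {poly R}) : g != 0 ->
  g ^+ 2 * f' %| g ^+ 2 + h ^+ 2 -> exists2 g', h = g * g' & f' %| 1 + g' ^+ 2.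
Proof.
move=> g0 dvd_sum; have : g ^+ 2 %| h ^+ 2.
  by rewrite -(dvdp_addr _ (dvdpp (g ^+ 2))) (dvdp_trans (dvdp_mulIl _ _) dvd_sum).
rewrite dvdp_pexp2r // => /dvdpP [g' hE]; exists g'; first by rewrite hE mulrC.
rewrite -(dvdp_mul2l _ _ (expf_neq0 2 g0)); apply: dvdp_trans dvd_sum _.
by rewrite hE (_ : _ + _ = g ^+ 2 * (1 + g' ^+ 2)) //; ring.
Qed.

Lemma dvdp_mul_of_sqr (f g k : {poly R}) : g != 0 -> g %| f ->
  f %| g ^+ 2 -> f %| k ^+ 2 -> f %| k * g.
Proof.
move=> g0 gf fg2 fk2; set c := f %/ g.
have fE : f = c * g by rewrite divpK.
have cg : c %| g by rewrite -(dvdp_mul2r _ _ g0) -fE -expr2.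
have ck : c %| k.
  rewrite -(dvdp_pexp2r _ _ (isT : (0 < 2)%N)) (dvdp_trans _ fk2) //.
  by rewrite fE expr2 dvdp_mul.
by rewrite fE dvdp_mul.
Qed.

Lemma cofactor_eq (g1 g3 f' g' : {poly R}) :
  g1 \is monic -> g3 \is monic -> f' \is monic -> coprimep g' f' ->
  g3 %| g1 * f' -> g1 ^+ 2 * f' %| g3 ^+ 2 -> g1 ^+ 2 * f' %| g3 * (g1 * g') ->
  g3 = g1 * f'.
Proof.
move=> g1m g3m f'm cop /dvdpP [t tE] dvd_g3g3 dvd_g3g2.
have [g10 g30] := (monic_neq0 g1m, monic_neq0 g3m).
have f'0 := monic_neq0 f'm.
have tg' : t %| g'.
  rewrite -(dvdp_mul2l _ _ (mulf_neq0 g10 g30)).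
  rewrite (_ : _ * t = g1 * (t * g3)); last by ring.
  rewrite (_ : g1 * (t * g3) = g1 ^+ 2 * f'); last by rewrite -tE; ring.
  by rewrite (_ : _ * g' = g3 * (g1 * g')) //; ring.
have tf' : t %| f'.
  apply: dvdp_trans (dvdp_mulIl t t) _; rewrite -expr2.
  rewrite -(dvdp_mul2l _ _ (mulf_neq0 (expf_neq0 2 g10) f'0)).
  rewrite (_ : g1 ^+ 2 * f' * f' = (t * g3) ^+ 2); last by rewrite -tE; ring.
  by rewrite exprMn [t ^+ 2 * _]mulrC dvdp_mul.
have t_monic : t \is monic by rewrite -(monicMr _ g3m) -tE monicMl.
have := coprimepP _ _ cop t tg' tf'.
by rewrite eqp_monic ?monic1 // tE => /eqP ->; rewrite mul1r.
Qed.

Lemma echelon_solve (g1 f' g' r a b : {poly R}) :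
  g1 * f' != 0 -> g' ^+ 2 = r * f' - 1 ->
  g1 ^+ 2 * f' %| b * (g1 * f') -> g1 ^+ 2 * f' %| a * g1 + b * (g1 * g') ->
  exists u v, a = u * g1 /\ b = u * (g1 * g') + v * (g1 * f').
Proof.
move=> g1f'0 g'E dvd_b dvd_ab.
have g10 : g1 != 0 by apply: contra_neq g1f'0 => ->; rewrite mul0r.
have [b' bE] : exists b', b = b' * g1.
  by apply/dvdpP; rewrite -(dvdp_mul2r _ _ g1f'0) mulrA -expr2.
have [t tE] : exists t, a + b' * g1 * g' = t * (g1 * f').
  apply/dvdpP; rewrite -(dvdp_mul2r _ _ g10).
  rewrite (_ : g1 * f' * g1 = g1 ^+ 2 * f'); last by ring.
  by rewrite (_ : (a + b' * g1 * g') * g1 = a * g1 + b * (g1 * g')) // bE; ring.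
exists (f' * t - b' * g'), (b' * r - t * g'); split.
  by rewrite (_ : a = t * (g1 * f') - b' * g1 * g'); [ring | rewrite -tE; ring].
rewrite bE; transitivity (b' * g1 * (r * f' - g' ^+ 2)); last by ring.
by rewrite g'E; ring.
Qed.

Lemma size_gt1_monic (p : {poly R}) : p \is monic -> p != 1 -> (1 < size p)%N.
Proof.
move=> pm p1; rewrite ltn_neqAle eq_sym size_poly_eq1 eqp_monic ?monic1 // p1.
by rewrite size_poly_gt0 monic_neq0.
Qed.

Lemma ltn_size_monicM (p q : {poly R}) :
  p \is monic -> p != 1 -> q != 0 -> (size q < size (p * q)%R)%N.
Proof. by move=> pm /(size_gt1_monic pm) p1 q0; rewrite size_monicM //; lia. Qed.

Lemma ltn_size_monicM2l (p q r : {poly R}) :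
  p \is monic -> (size q < size r)%N -> (size (p * q)%R < size (p * r)%R)%N.
Proof.
move=> pm sqr; have r0 : r != 0 by rewrite -size_poly_gt0 (leq_trans _ sqr).
have [-> | q0] := eqVneq q 0.
  by rewrite mulr0 size_poly0 size_poly_gt0 mulf_neq0 // monic_neq0.
have := size_poly_gt0 p; rewrite monic_neq0 // => p0.
by rewrite !size_monicM //; lia.
Qed.

End PolyDivisibility.

Section QuotientRing.
Variables (F : finFieldType) (f : {poly F}).
Hypotheses (f_monic : f \is monic) (f_gt1 : (1 < size f)%N).
Local Notation A := {poly %/ f}.
Local Notation pi := (in_qpoly f).
Implicit Types (p q g : {poly F}) (a b c d : A).

Lemma mk_monic_id : mk_monic f = f.
Proof. by rewrite /mk_monic f_gt1 f_monic. Qed.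

Lemma size_qpoly a : (size (val a) < size f)%N.
Proof. by rewrite -[in X in (_ < X)%N]mk_monic_id size_mk_monic. Qed.

Lemma val_in_qpoly p : val (pi p) = p %% f.
Proof. by rewrite /= mk_monic_id Pdiv.IdomainMonic.modpE. Qed.

Lemma val_in_qpoly_small p : (size p < size f)%N -> val (pi p) = p.
Proof. by move=> sp; rewrite val_in_qpoly modp_small. Qed.

Lemma val_qpoly1 : val (1 : A) = 1.
Proof. by rewrite -(in_qpoly1 f) val_in_qpoly_small // size_poly1. Qed.

Lemma in_qpoly_val a : pi (val a) = a.
Proof. exact/val_inj/val_in_qpoly_small/size_qpoly. Qed.

Lemma qpoly_eq0 a : (a == 0) = (val a == 0).
Proof. by []. Qed.

Lemma in_qpoly_eq0 p : (pi p == 0) = (f %| p).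
Proof. by rewrite qpoly_eq0 val_in_qpoly; apply/eqP/modp_eq0P. Qed.

Lemma in_qpoly_f : pi f = 0.
Proof. by apply/eqP; rewrite in_qpoly_eq0. Qed.

Lemma dvdp_val_in_qpoly g p : g %| f -> (g %| val (pi p)) = (g %| p).
Proof. by move=> gf; rewrite val_in_qpoly -dvdp_mod. Qed.

Lemma dvdp_val_mul g (u : A) : g %| f -> g %| val (u * pi g).
Proof. by move=> gf; rewrite -[u]in_qpoly_val -rmorphM dvdp_val_in_qpoly ?dvdp_mull. Qed.

Lemma in_qpoly_divpK g a : g %| val a -> pi (val a %/ g) * pi g = a.
Proof. by move=> ga; rewrite -rmorphM /= divpK // in_qpoly_val. Qed.

Lemma qpoly_ideal (P : pred A) : P 0 ->
    (forall a b, P a -> P b -> P (a + b)) -> (forall c a, P a -> P (c * a)) ->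
  exists g, [/\ g \is monic, g %| f & forall p, P (pi p) = (g %| p)].
Proof.
move=> P0 PD PM.
(* [f] itself is a candidate, so that the zero ideal is generated by [f]. *)
pose Q n := [exists a, [&& P a, a != 0 & size (val a) == n]] || (n == size f).
have Qf : Q (size f) by rewrite /Q eqxx orbT.
have [n Qn minQ] := ex_minnP (ex_intro Q _ Qf).
have [p [Pp p0 sp]] : exists p, [/\ P (pi p), p != 0 & size p = n].
  case/orP: Qn => [/existsP [a /and3P [Pa a0 /eqP sa]] | /eqP sf].
    by exists (val a); rewrite in_qpoly_val.
  by exists f; rewrite in_qpoly_f monic_neq0.
have dvd_P q : P (pi q) = (p %| q).
  apply/idP/idP => [Pq | /dvdpP [s ->]]; last by rewrite rmorphM PM.
  apply/modp_eq0P/eqP; apply: contraT => r0.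
  have Pr : P (pi (q %% p)).
    have -> : pi (q %% p) = pi q + (- pi (q %/ p)) * pi p.
      by rewrite mulNr -rmorphM -rmorphB /= {2}(divp_eq q p) addrC addKr.
    exact/PD/PM.
  have srp : (size (q %% p)%R < size p)%N by rewrite ltn_modp.
  have vr : val (pi (q %% p)) = q %% p.
    by rewrite val_in_qpoly_small // (leq_trans srp) // sp minQ.
  have : (n <= size (q %% p)%R)%N.
    apply/minQ/orP; left; apply/existsP; exists (pi (q %% p)).
    by rewrite Pr qpoly_eq0 vr r0 eqxx.
  by rewrite -sp leqNgt srp.
have lp0 : (lead_coef p)^-1 != 0 by rewrite invr_eq0 lead_coef_eq0.
exists ((lead_coef p)^-1 *: p); split => [||q].
- by rewrite monicE lead_coefZ mulVf ?lead_coef_eq0.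
- by rewrite dvdpZl // -dvd_P in_qpoly_f.
- by rewrite dvdpZl.
Qed.

Lemma row2E (v : 'rV[A]_2) : v = mx12 (v 0 0) (v 0 ord_max).
Proof.
apply/rowP => j; rewrite mxE; case: ifP => [/eqP -> //|].
by case: j => [[|[|m]] //] jl _; congr (v 0); apply: val_inj.
Qed.

Lemma mx12_inj a b c d : mx12 a b = mx12 c d -> a = c /\ b = d.
Proof.
move=> e; split.
  by move: (congr1 (fun v : 'rV[A]_2 => v 0 0) e); rewrite !mxE.
by move: (congr1 (fun v : 'rV[A]_2 => v 0 ord_max) e); rewrite !mxE.
Qed.

Lemma mx12D a b c d : mx12 a b + mx12 c d = mx12 (a + c) (b + d).
Proof. by apply/rowP => j; rewrite !mxE; case: ifP. Qed.

Lemma mx12Z (u : A) a b : u *: mx12 a b = mx12 (u * a) (u * b).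
Proof. by apply/rowP => j; rewrite !mxE; case: ifP. Qed.

Lemma mx12_0 : mx12 0 0 = 0 :> 'rV[A]_2.
Proof. by apply/rowP => j; rewrite !mxE; case: ifP. Qed.

Lemma dot_mx12 a b c d : \sum_(i < 2) mx12 a b 0 i * mx12 c d 0 i = a * c + b * d.
Proof. by rewrite big_ord_recr big_ord_recr big_ord0 /= !mxE /= add0r. Qed.

Lemma mul_row_mx12 (u : 'rV[A]_1) a b : u *m mx12 a b = mx12 (u 0 0 * a) (u 0 0 * b).
Proof.
apply/rowP => j; rewrite !mxE big_ord_recr big_ord0 /= add0r !mxE.
have -> : ord_max = 0 :> 'I_1 by apply: val_inj.
by case: ifP.
Qed.

Lemma mul_row_mx22 (u : 'rV[A]_2) a b c d :
  u *m mx22 a b c d = mx12 (u 0 0 * a + u 0 ord_max * c) (u 0 0 * b + u 0 ord_max * d).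
Proof.
apply/rowP => j; rewrite !mxE big_ord_recr big_ord_recr big_ord0 /= add0r !mxE /=.
have -> : widen_ord (leqnSn 1) ord_max = 0 :> 'I_2 by apply: val_inj.
by case: ifP.
Qed.

Lemma row0_mx22 a b c d : row 0 (mx22 a b c d) = mx12 a b.
Proof. by apply/rowP => j; rewrite !mxE. Qed.

Lemma row1_mx22 a b c d : row ord_max (mx22 a b c d) = mx12 c d.
Proof. by apply/rowP => j; rewrite !mxE. Qed.

Lemma sum_ord2 (G : 'I_2 -> 'rV[A]_2) : \sum_(j < 2) G j = G 0 + G ord_max.
Proof.
rewrite big_ord_recr big_ord_recr big_ord0 /= add0r.
by congr (G _ + _); apply: val_inj.
Qed.

Lemma mem_dual_mx12 (C : {set 'rV[A]_2}) a b :
  mx12 a b \in dual C <-> forall c d, mx12 c d \in C -> a * c + b * d = 0.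
Proof.
rewrite inE; split => [/forall_inP orth c d /orth | orth].
  by rewrite dot_mx12 => /eqP.
by apply/forall_inP => v; rewrite [v]row2E dot_mx12 => /orth ->.
Qed.

Definition gen_echelon (C : {set 'rV[A]_2}) (x1 x2 x3 : A) : Prop :=
  forall a b, mx12 a b \in C <-> exists u v, a = u * x1 /\ b = u * x2 + v * x3.

Section Echelon.
Variables (C : {set 'rV[A]_2}) (x1 x2 x3 : A).
Hypothesis genC : gen_echelon C x1 x2 x3.

Lemma mem_dual_echelon a b :
  mx12 a b \in dual C <-> a * x1 + b * x2 = 0 /\ b * x3 = 0.
Proof.
rewrite mem_dual_mx12; split => [orth | [e12 e3] c d /genC [u [v [-> ->]]]].
  split; first by apply: orth; apply/genC; exists 1, 0; split; ring.
  by rewrite -(orth 0 x3) ?mulr0 ?add0r //; apply/genC; exists 0, 1; split; ring.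
transitivity (u * (a * x1 + b * x2) + v * (b * x3)); first by ring.
by rewrite e12 e3; ring.
Qed.

Lemma echelon_self_orthogonal a b :
  x1 * x1 + x2 * x2 = 0 -> x2 * x3 = 0 -> x3 * x3 = 0 ->
  mx12 a b \in C -> mx12 a b \in dual C.
Proof.
move=> E11 E23 E33 /genC [u [v [-> ->]]]; apply/mem_dual_echelon; split.
  by transitivity (u * (x1 * x1 + x2 * x2) + v * (x2 * x3)); [ring | rewrite E11 E23; ring].
by transitivity (u * (x2 * x3) + v * (x3 * x3)); [ring | rewrite E23 E33; ring].
Qed.

Lemma gen_echelon_shift w : gen_echelon C x1 (x2 + w * x3) x3.
Proof.
move=> a b; rewrite genC; split => [[u [v [-> ->]]] | [u [v [-> ->]]]].
  by exists u, (v - u * w); split; ring.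
by exists u, (u * w + v); split; ring.
Qed.

End Echelon.

Lemma gen_echelon_mx22 C x1 x2 x3 : gen_echelon C x1 x2 x3 <->
  (forall v, v \in C <-> exists a : 'rV[A]_2, v = a *m mx22 x1 x2 0 x3).
Proof.
have rowspan u v : (exists a : 'rV[A]_2, mx12 u v = a *m mx22 x1 x2 0 x3) <->
    exists s t, u = s * x1 /\ v = s * x2 + t * x3.
  split => [[a] | [s [t [-> ->]]]].
    by rewrite mul_row_mx22 mulr0 addr0 => /mx12_inj [-> ->]; exists (a 0 0), (a 0 ord_max).
  by exists (mx12 s t); rewrite mul_row_mx22 !mxE /= mulr0 addr0.
split => [genC v | rowsC a b]; first by rewrite [v]row2E genC rowspan.
by rewrite rowsC rowspan.
Qed.

Lemma gen_echelon_mx12 C (g : A) : gen_echelon C 1 g 0 <->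
  (forall v, v \in C <-> exists a : 'rV[A]_1, v = a *m mx12 1 g).
Proof.
have rowspan u v : (exists a : 'rV[A]_1, mx12 u v = a *m mx12 1 g) <->
    exists s t, u = s * 1 /\ v = s * g + t * 0.
  split => [[a] | [s [t [-> ->]]]].
    rewrite mul_row_mx12 mulr1 => /mx12_inj [-> ->].
    by exists (a 0 0), 0; rewrite mulr1 mulr0 addr0.
  by exists (const_mx s); rewrite mul_row_mx12 !mxE mulr0 addr0.
split => [genC v | rowsC a b]; first by rewrite [v]row2E genC rowspan.
by rewrite rowsC rowspan.
Qed.

Lemma CGM12_gen_echelon C (g : A) : is_CGM C (mx12 1 g) -> gen_echelon C 1 g 0.
Proof. by case=> li [rowsC _ _ _ _]; apply/gen_echelon_mx12. Qed.

Lemma CGM22_gen_echelon C x1 x2 x3 :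
  is_CGM C (mx22 x1 x2 0 x3) -> gen_echelon C x1 x2 x3.
Proof. by case=> li [rowsC _ _ _ _]; apply/gen_echelon_mx22. Qed.

Lemma code_gen_echelon C : is_code C ->
  exists g1 g3 (h : A), [/\ g1 \is monic, g1 %| f, g3 \is monic,
    forall p, (mx12 0 (pi p) \in C) = (g3 %| p) & gen_echelon C (pi g1) h (pi g3)].
Proof.
case=> C0 CD CZ; rewrite -mx12_0 in C0.
have CD12 a b c d : mx12 a b \in C -> mx12 c d \in C -> mx12 (a + c) (b + d) \in C.
  by rewrite -mx12D; apply: CD.
have CZ12 u a b : mx12 a b \in C -> mx12 (u * a) (u * b) \in C.
  by rewrite -mx12Z; apply: CZ.
pose lead a := [exists b, mx12 a b \in C].
have lead0 : lead 0 by apply/existsP; exists 0.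
have leadD a c : lead a -> lead c -> lead (a + c).
  move=> /existsP [b Cab] /existsP [d Ccd].
  by apply/existsP; exists (b + d); apply: CD12.
have leadM u a : lead a -> lead (u * a).
  by move=> /existsP [b Cab]; apply/existsP; exists (u * b); apply: CZ12.
have [g1 [g1m g1f memI]] := qpoly_ideal lead0 leadD leadM.
have tailD b d : mx12 0 b \in C -> mx12 0 d \in C -> mx12 0 (b + d) \in C.
  by move=> /CD12 Cb /Cb; rewrite addr0.
have tailM u b : mx12 0 b \in C -> mx12 0 (u * b) \in C.
  by move=> /(CZ12 u); rewrite mulr0.
have [g3 [g3m _ memJ]] := qpoly_ideal C0 tailD tailM.
have /existsP [h Ch] : lead (pi g1) by rewrite memI.
exists g1, g3, h; split => // a b; split => [Cab | [u [v [-> ->]]]].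
  have [u aE] : exists u, a = u * pi g1.
    exists (pi (val a %/ g1)); rewrite in_qpoly_divpK // -(memI (val a)) in_qpoly_val.
    by apply/existsP; exists b.
  have : mx12 0 (b - u * h) \in C.
    by have := CD12 _ _ _ _ Cab (CZ12 (- u) _ _ Ch); rewrite aE !mulNr subrr.
  rewrite -[b - _]in_qpoly_val memJ => /in_qpoly_divpK vE.
  by exists u, (pi (val (b - u * h) %/ g3)); rewrite vE addrC subrK.
have Cx3 : mx12 0 (pi g3) \in C by rewrite memJ.
by have := CD12 _ _ _ _ (CZ12 u _ _ Ch) (CZ12 v _ _ Cx3); rewrite mulr0 addr0.
Qed.

Section SelfDualCode.
Variables (C : {set 'rV[A]_2}) (g1 g3 : {poly F}) (h : A).
Hypotheses (g1f : g1 %| f) (memJ : forall p, (mx12 0 (pi p) \in C) = (g3 %| p)).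
Hypotheses (genC : gen_echelon C (pi g1) h (pi g3)) (selfdual : C = dual C).

Lemma mem_selfdual a b : mx12 a b \in C <-> a * pi g1 + b * h = 0 /\ b * pi g3 = 0.
Proof. by rewrite {1}selfdual (mem_dual_echelon genC). Qed.

Lemma selfdual_lead : exists f', f = g1 ^+ 2 * f'.
Proof.
have /genC [u [_ [uE _]]] : mx12 (pi (f %/ g1)) 0 \in C.
  by apply/mem_selfdual; rewrite -rmorphM /= divpK // in_qpoly_f !mul0r addr0.
have : g1 %| val (pi (f %/ g1)) by rewrite uE dvdp_val_mul.
rewrite dvdp_val_in_qpoly // => /dvdpP [f' fE]; exists f'.
by rewrite -(divpK g1f) fE; ring.
Qed.

Lemma selfdual_sqr : f %| g1 ^+ 2 + val h ^+ 2.
Proof.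
have /mem_selfdual [e _] : mx12 (pi g1) h \in C by apply/genC; exists 1, 0; split; ring.
by rewrite -in_qpoly_eq0 rmorphD !rmorphXn /= in_qpoly_val !expr2 e.
Qed.

Lemma selfdual_tail : f %| g3 ^+ 2 /\ f %| g3 * val h.
Proof.
have /mem_selfdual [e32 e33] : mx12 0 (pi g3) \in C by rewrite memJ.
rewrite mul0r add0r in e32; rewrite -!in_qpoly_eq0 rmorphXn expr2.
by rewrite rmorphM /= in_qpoly_val e33 e32.
Qed.

Lemma selfdual_tail_dvdp k : f %| k * val h -> f %| k * g3 -> g3 %| k.
Proof.
move=> dvd_kh dvd_kg3; rewrite -memJ; apply/mem_selfdual; split.
  by apply/eqP; rewrite mul0r add0r -[h]in_qpoly_val -rmorphM in_qpoly_eq0.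
by apply/eqP; rewrite -rmorphM in_qpoly_eq0.
Qed.

End SelfDualCode.

Lemma selfdual_echelon_data C : is_code C -> C = dual C ->
  exists g1 g' f' r, [/\ g1 \is monic, f = g1 ^+ 2 * f', g' ^+ 2 = r * f' - 1,
    (size g' < size f')%N & gen_echelon C (pi g1) (pi (g1 * g')) (pi (g1 * f'))].
Proof.
move=> HC selfdual.
have [g1 [g3 [h [g1m g1f g3m memJ genC]]]] := code_gen_echelon HC.
have g3f : g3 %| f by rewrite -memJ in_qpoly_f mx12_0; case: HC.
have [f' fE] := selfdual_lead g1f genC selfdual.
have f'm : f' \is monic by rewrite -(monicMl f' (monic_exp 2 g1m)) -fE.
have : g1 ^+ 2 * f' %| g1 ^+ 2 + val h ^+ 2 by rewrite -fE (selfdual_sqr genC selfdual).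
case/(dvdp_sqr_sum (monic_neq0 g1m)) => g0 hE /dvdpP [k kE].
have [dvd_g3g3 dvd_g3h] := selfdual_tail memJ genC selfdual.
have cop : coprimep g0 f'.
  by apply/Bezout_eq1_coprimepP; exists (- g0, k); rewrite /= -kE; ring.
have dvd_g3 : g3 %| g1 * f'.
  apply: (selfdual_tail_dvdp memJ genC selfdual).
    rewrite hE (_ : g1 * f' * (g1 * g0) = g0 * (g1 ^+ 2 * f')); last by ring.
    by rewrite -fE; apply/dvdp_mull/dvdpp.
  apply: dvdp_mul_of_sqr (monic_neq0 g3m) g3f dvd_g3g3 _.
  rewrite (_ : (g1 * f') ^+ 2 = f' * (g1 ^+ 2 * f')); last by ring.
  by rewrite -fE; apply/dvdp_mull/dvdpp.
have g3E : g3 = g1 * f'.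
  by apply: (cofactor_eq g1m g3m f'm cop dvd_g3); rewrite -fE // -hE.
set q := g0 %/ f'; set g' := g0 %% f'.
have g0E : g0 = q * f' + g' by apply: divp_eq.
exists g1, g', f', (k - q * (q * f' + 2%:R * g')); split => //.
- by rewrite mulrBl -kE g0E; ring.
- by rewrite ltn_modp monic_neq0.
have h_red : h + - pi q * pi (g1 * f') = pi (g1 * g').
  by rewrite -[h]in_qpoly_val hE mulNr -rmorphM -rmorphB g0E; congr pi; ring.
by rewrite -h_red -g3E; apply: gen_echelon_shift.
Qed.

Lemma echelon_orthogonal g1 g' f' r : f = g1 ^+ 2 * f' -> g' ^+ 2 = r * f' - 1 ->
  [/\ pi g1 * pi g1 + pi (g1 * g') * pi (g1 * g') = 0,
      pi (g1 * g') * pi (g1 * f') = 0 & pi (g1 * f') * pi (g1 * f') = 0].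
Proof.
move=> fE g'E; split; apply/eqP; rewrite -!rmorphM -?rmorphD in_qpoly_eq0 fE.
- rewrite (_ : g1 * g1 + _ = r * (g1 ^+ 2 * f')) ?dvdp_mulIr //.
  by transitivity (g1 ^+ 2 * (g' ^+ 2 + 1)); [ring | rewrite g'E; ring].
- by rewrite (_ : g1 * g' * _ = g' * (g1 ^+ 2 * f')) ?dvdp_mulIr //; ring.
- by rewrite (_ : g1 * f' * _ = f' * (g1 ^+ 2 * f')) ?dvdp_mulIr //; ring.
Qed.

Lemma echelon_selfdual C g1 g' f' r : f = g1 ^+ 2 * f' -> g' ^+ 2 = r * f' - 1 ->
  gen_echelon C (pi g1) (pi (g1 * g')) (pi (g1 * f')) -> C = dual C.
Proof.
move=> fE g'E genC; have [E11 E23 E33] := echelon_orthogonal fE g'E.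
have g1f'0 : g1 * f' != 0.
  by apply: contra_neq (monic_neq0 f_monic) => e; rewrite fE expr2 -mulrA e mulr0.
apply/setP => v; rewrite [v]row2E; set a := v 0 0; set b := v 0 ord_max.
apply/idP/idP => [|/(mem_dual_echelon genC) [e12 e3]].
  exact: echelon_self_orthogonal.
have dvd_b : g1 ^+ 2 * f' %| val b * (g1 * f').
  by rewrite -[b]in_qpoly_val -rmorphM /= in e3; rewrite -fE -in_qpoly_eq0 e3.
have dvd_ab : g1 ^+ 2 * f' %| val a * g1 + val b * (g1 * g').
  rewrite -[a]in_qpoly_val -[b]in_qpoly_val -!rmorphM -rmorphD /= in e12.
  by rewrite -fE -in_qpoly_eq0 e12.
have [s [t [aE bE]]] := echelon_solve g1f'0 g'E dvd_b dvd_ab.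
apply/genC; exists (pi s), (pi t).
by rewrite -!rmorphM -rmorphD -aE -bE /= !in_qpoly_val.
Qed.

Lemma CGM12_selfdual C (g : A) : is_CGM C (mx12 1 g) -> g ^+ 2 = -1 -> C = dual C.
Proof.
move=> CGM_C gE; have /dvdpP [r rE] : f %| val g ^+ 2 + 1.
  by rewrite -in_qpoly_eq0 rmorphD rmorphXn rmorph1 /= in_qpoly_val gE addNr.
apply: (@echelon_selfdual C 1 (val g) f r); first by rewrite expr1n mul1r.
  by rewrite -rE addrK.
by rewrite !mul1r rmorph1 in_qpoly_f in_qpoly_val; apply: CGM12_gen_echelon.
Qed.

Lemma CGM22_selfdual C (g1 g2 g3 : A) g' f' r : is_CGM C (mx22 g1 g2 0 g3) ->
  g' ^+ 2 = r * f' - 1 -> f = apoly g1 ^+ 2 * f' ->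
  apoly g3 = apoly g1 * f' -> apoly g2 = apoly g1 * g' -> C = dual C.
Proof.
move=> CGM_C g'E fE g3E g2E; apply: (echelon_selfdual fE g'E).
by rewrite -g3E -g2E !in_qpoly_val; apply: CGM22_gen_echelon.
Qed.

Lemma gen_echelon_CGM12 C (g : A) : gen_echelon C 1 g 0 -> is_CGM C (mx12 1 g).
Proof.
move=> genC; exists (fun _ => 0); split.
- exact/gen_echelon_mx12.
- by split => [i [j hj] //|i]; rewrite mxE oner_neq0.
- by split => i; rewrite mxE /= /apoly val_qpoly1 ?monic1 ?dvd1p.
- split => [[[|i] hi] [[|j] hj] // | i].
  exists (fun _ => 0); split => //.
  rewrite mxE /= /apoly val_qpoly1 divp1 in_qpoly_f scale0r big1 // => j _; exact: scale0r.
- by move=> [[|i] hi] [[|j] hj].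
Qed.

Lemma gen_echelon_CGM22 C g1 g2 g3 :
  g1 \is monic -> g3 \is monic -> g1 %| f -> g3 %| f ->
  (size g1 < size f)%N -> (size g3 < size f)%N -> (size g2 < size g3)%N ->
  g3 %| (f %/ g1) * g2 -> gen_echelon C (pi g1) (pi g2) (pi g3) ->
  is_CGM C (mx22 (pi g1) (pi g2) 0 (pi g3)).
Proof.
move=> g1m g3m g1f g3f sg1 sg3 sg2 dvd_g3 genC.
have [v1 v2 v3] : [/\ val (pi g1) = g1, val (pi g2) = g2 & val (pi g3) = g3].
  by split; apply: val_in_qpoly_small => //; apply: ltn_trans sg3.
have ord0E (lt02 : (0 < 2)%N) : Ordinal lt02 = 0 by apply: val_inj.
have ord1E (lt12 : (1 < 2)%N) : Ordinal lt12 = ord_max by apply: val_inj.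
exists id; split.
- exact/gen_echelon_mx22.
- split => [[[|[|i]] hi] [[|[|j]] hj] //= _ | [[|[|i]] hi] //]; rewrite !mxE //=.
    by rewrite qpoly_eq0 v1 monic_neq0.
  by rewrite qpoly_eq0 v3 monic_neq0.
- by split => [[[|[|i]] hi] | [[|[|i]] hi]] //; rewrite mxE /= /apoly ?v1 ?v3.
- split => // [[[|[|i]] hi]] //.
    have /dvdpP [q qE] := dvd_g3.
    exists (fun j => if j == 0 then 0 else pi q); split => [[[|j] hj]|] //.
    rewrite ord0E sum_ord2 mxE /= /apoly v1 row0_mx22 row1_mx22 !mx12Z mx12D /=.
    by rewrite -!rmorphM /= divpK // in_qpoly_f qE rmorphM !mul0r mulr0 !add0r.
  exists (fun _ => 0); split => //.
  rewrite ord1E sum_ord2 mxE /= /apoly v3 row1_mx22 !scale0r addr0 mx12Z mulr0.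
  by rewrite -rmorphM /= divpK // in_qpoly_f mx12_0.
- by move=> [[|[|i]] hi] [[|[|j]] hj] //= _; rewrite !mxE /= /apoly v2 v3.
Qed.

Lemma echelon_CGM12 C g' r : g' ^+ 2 = r * f - 1 ->
  gen_echelon C (pi 1) (pi g') (pi f) -> is_CGM C (mx12 1 (pi g')) /\ pi g' ^+ 2 = -1.
Proof.
rewrite rmorph1 in_qpoly_f => g'E genC; split; first exact: gen_echelon_CGM12.
by rewrite -rmorphXn g'E rmorphB rmorphM /= in_qpoly_f mulr0 rmorph1 sub0r.
Qed.

Lemma echelon_CGM22 C g1 g' f' :
  g1 \is monic -> g1 != 1 -> f = g1 ^+ 2 * f' -> (size g' < size f')%N ->
  gen_echelon C (pi g1) (pi (g1 * g')) (pi (g1 * f')) ->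
  [/\ is_CGM C (mx22 (pi g1) (pi (g1 * g')) 0 (pi (g1 * f'))),
      apoly (pi g1) = g1, apoly (pi (g1 * g')) = g1 * g'
    & apoly (pi (g1 * f')) = g1 * f'].
Proof.
move=> g1m g1n1 fE sg' genC.
have f'm : f' \is monic by rewrite -(monicMl f' (monic_exp 2 g1m)) -fE.
have g1f'm : g1 * f' \is monic by rewrite monicMl.
have fE' : f = g1 * (g1 * f') by rewrite fE; ring.
have s3 : (size (g1 * f')%R < size f)%N by rewrite fE' ltn_size_monicM ?monic_neq0.
have s1 : (size g1 < size f)%N.
  by rewrite (leq_ltn_trans _ s3) // dvdp_leq ?monic_neq0 ?dvdp_mulIl.
have s2 : (size (g1 * g')%R < size (g1 * f')%R)%N by apply: ltn_size_monicM2l.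
rewrite /apoly !val_in_qpoly_small ?(ltn_trans s2) //; split => //.
apply: gen_echelon_CGM22 => //; rewrite ?fE' ?dvdp_mulIl ?dvdp_mulIr //.
by rewrite mulKp ?monic_neq0 // dvdp_mulIl.
Qed.

End QuotientRing.

Theorem mainTheorem8 (F : finFieldType) (f : {poly F})
  (f_monic : f \is monic) (f_deg : (1 < size f)%N)
  (C : {set 'rV[{poly %/ f}]_2}) (HC : is_code C) :
  C = dual C <->
  (exists g2 : {poly %/ f}, is_CGM C (mx12 1 g2) /\ g2 ^+ 2 = -1) \/
  (exists g1 g2 g3 : {poly %/ f}, is_CGM C (mx22 g1 g2 0 g3) /\
     exists g' f' r : {poly F},
       [/\ g' ^+ 2 = r * f' - 1, f = apoly g1 ^+ 2 * f',
           apoly g3 = apoly g1 * f' & apoly g2 = apoly g1 * g']).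
Proof.
split => [selfdual | [[g2 [CGM_C g2E]] | [g1 [g2 [g3 [CGM_C [g' [f' [r [g'E fE g3E g2E]]]]]]]]]].
- have [g1 [g' [f' [r [g1m fE g'E sg' genC]]]]] :=
    selfdual_echelon_data f_monic f_deg HC selfdual.
  have [g1_1 | g1n1] := eqVneq g1 1.
    move: fE g'E genC; rewrite g1_1 expr1n !mul1r => <- g'E genC.
    by left; exists (in_qpoly f g'); apply: (echelon_CGM12 f_monic f_deg g'E genC).
  have [CGM_C v1 v2 v3] := echelon_CGM22 f_monic f_deg g1m g1n1 fE sg' genC.
  right; exists (in_qpoly f g1), (in_qpoly f (g1 * g')), (in_qpoly f (g1 * f')).
  by split => //; exists g', f', r; rewrite v1 v2 v3.
- exact: (CGM12_selfdual f_monic f_deg CGM_C g2E).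
- exact: (CGM22_selfdual f_monic f_deg CGM_C g'E fE g3E g2E).
Qed.
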